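(* Fix $m\in[n]$. There is a unique bijection $\psi_m$ between the set of complete $m$-chains of $\Pi(n)$ and the set of $(m,n)$-parking functions that sends a chain $C$ with top element $P$ and Jordan–Hölder permutation $\lambda$ to a partial parking function with priority forest $P$ and bird's eye permutation $\lambda^{-1}$. Explicitly, $\psi_m(C)=s_P\circ\lambda$, where $s_P$ is the shifted parent map of $P$.
   Context: Notation: $[n]=\{1,\dots,n\}$, $[n]_0=\{0,1,\dots,n\}$. Partial functions $f:[a]\to[b]$ are functions defined on a subset of $[a]$; a partial permutation is an injective one, and its inverse is the partial function defined on its image reversing it; compositions are defined where both steps are defined. Priority forests and the priority lattice: a priority forest (on $[n]_0$, with $m$ edges) is a rooted forest with vertex set $[n]_0$ and $m$ edges whose component trees $T_0,\dots,T_{n-m}$ are increasing (each non-root vertex has a larger label than its parent) and satisfy: for $j<k$ every label of $T_j$ is smaller than every label of $T_k$. The priority lattice $\Pi(n)$ consists of all priority forests on $[n]_0$ together with an extra top element $\hat1$; for priority forests $P\le P'$ iff $E(P)\subseteq E(P')$. The bottom $\hat0$ is the edgeless forest. A complete $m$-chain is a saturated chain $\hat0=P_0\lessdot P_1\lessdot\cdots\lessdot P_m$ of priority forests (each obtained from the previous by adding one edge). For priority forests $P\lessdot P'$, $\lambda(P,P')$ is the larger endpoint of the unique edge in $E(P')\setminus E(P)$; the Jordan–Hölder permutation of such a chain is the injective map $\lambda:[m]\to[n]$, $i\mapsto\lambda(P_{i-1},P_i)$, with partial inverse $\lambda^{-1}:[n]\to[m]$. Shifted parent map: for a priority forest $P$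 with parent map $p$ (defined on non-root vertices), $s_P:[n]\to[n]$ is the partial function with $s_P(i)=p(i)+1$ for every non-root vertex $i$ and undefined at roots. Partial parking functions: an $(m,n)$-parking function is a map $\pi:[m]\to[n]$ such that when cars $1,\dots,m$ arrive in this order to a one-way street with spots $1,\dots,n$, and car $i$ parks in the first empty spot $\ge\pi(i)$, all $m$ cars park. Its bird's eye permutation $\omega_\pi:[n]\to[m]$ is the partial permutation sending an occupied spot to the car parked there (undefined on empty spots). The priority forest of $\pi$ is the priority forest (on $[n]_0$, with $m$ edges) whose shifted parent map is $\pi\circ\omega_\pi$, i.e. vertex $i$ is a non-root with parent $\pi(\omega_\pi(i))-1$ if spot $i$ is occupied, and a root otherwise. *)

From mathcomp Require Import all_boot.
Set Implicit Arguments.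
Unset Strict Implicit.
Unset Printing Implicit Defensive.

(* Vertices of [n]_0 = {0,...,n}: the ordinal 'I_n.+1, whose value is the label. *)
Definition vert (n : nat) := 'I_n.+1.

(* A forest on [n]_0 is given by its set of directed edges (parent, child). *)
Definition pedges (n : nat) := {set vert n * vert n}.

Definition adj n (E : pedges n) : rel (vert n) :=
  fun x y => ((x, y) \in E) || ((y, x) \in E).
Definition samecomp n (E : pedges n) (x y : vert n) : bool := connect (adj E) x y.

Definition is_pforest n (E : pedges n) : bool :=
  [&& [forall e in E, e.1 < e.2],
      [forall c : vert n, forall a : vert n, forall b : vert n,
          ((a, c) \in E) && ((b, c) \in E) ==> (a == b)] &
      [forall x : vert n, forall y : vert n, forall x' : vert n, forall y' : vert n,
          [&& samecomp E x x', samecomp E y y', ~~ samecomp E x y & x < y]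
          ==> (x' < y')]].

(* A complete m-chain \hat0 = P_0 <. P_1 <. ... <. P_m, stored as a finite
   function k |-> E(P_k). *)
Definition chain_t n m := {ffun 'I_m.+1 -> pedges n}.
Definition ch n m (C : chain_t n m) (k : nat) : pedges n := C (inord k).

Definition is_chain n m (C : chain_t n m) : bool :=
  [&& ch C 0 == set0,
      [forall k : 'I_m.+1, is_pforest (C k)] &
      [forall k : 'I_m, exists e : vert n * vert n,
          (e \notin ch C k) && (ch C k.+1 == e |: ch C k)]].

(* Partial functions [a] -> [b] are encoded as nat -> option nat. *)
Definition pfcomp (g f : nat -> option nat) : nat -> option nat :=
  fun i => obind g (f i).

Definition pinv (m : nat) (f : nat -> option nat) : nat -> option nat :=
  fun j => ohead [seq i <- iota 1 m | f i == Some j].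

Definition lam n m (C : chain_t n m) : nat -> option nat :=
  fun i => if (1 <= i <= m) then
             omap (fun e : vert n * vert n => maxn (val e.1) (val e.2))
                  [pick e in ch C i :\: ch C i.-1]
           else None.

Definition lam_inv n m (C : chain_t n m) : nat -> option nat := pinv m (lam C).

Definition sP n (E : pedges n) : nat -> option nat :=
  fun i => if (1 <= i <= n) then
             omap (fun e : vert n * vert n => (val e.1).+1)
                  [pick e in E | val e.2 == i]
           else None.

(* (m,n) parking functions pi : [m] -> [n] encoded as f : {ffun 'I_m -> 'I_n}
   with pi (k.+1) = (f k).+1. *)
Definition pf_t n m := {ffun 'I_m -> 'I_n}.
Definition pv n m (f : pf_t n m) : nat -> option nat :=
  fun i => if i is k.+1 then omap (fun o : 'I_m => (val (f o)).+1) (insub k)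
           else None.

(* first empty spot >= a among spots 1..n (n.+1 if there is none) *)
Definition first_free (n : nat) (occ : seq nat) (a : nat) : nat :=
  head n.+1 [seq s <- iota a (n.+1 - a) | s \notin occ].

Fixpoint parkrec (n : nat) (occ : seq nat) (prefs : seq nat) : seq nat :=
  match prefs with
  | [::] => [::]
  | a :: r => let s := first_free n occ a in s :: parkrec n (s :: occ) r
  end.

Definition spots n m (f : pf_t n m) : seq nat :=
  parkrec n [::] [seq (val (f i)).+1 | i <- enum 'I_m].

Definition is_parking n m (f : pf_t n m) : bool :=
  all (fun s => s <= n) (spots f).

Definition omega n m (f : pf_t n m) : nat -> option nat :=
  fun j => if (1 <= j <= n) && (j \in spots f) then Some (index j (spots f)).+1
           else None.

Definition chain_pf_bij n m (psi : chain_t n m -> pf_t n m) : Prop :=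
  [/\ forall C, is_chain C -> is_parking (psi C),
      forall C1 C2, is_chain C1 -> is_chain C2 -> psi C1 = psi C2 -> C1 = C2 &
      forall f, is_parking f -> exists2 C, is_chain C & psi C = f].

(* psi sends every chain C with top P = P_m and Jordan-Holder permutation
   lambda to a parking function with priority forest P (i.e. whose shifted
   parent map pi o omega_pi equals s_P) and bird's eye permutation lambda^-1. *)
Definition psi_spec n m (psi : chain_t n m -> pf_t n m) : Prop :=
  forall C, is_chain C ->
    (forall j, 1 <= j <= n -> pfcomp (pv (psi C)) (omega (psi C)) j = sP (ch C m) j)
    /\ (forall j, 1 <= j <= n -> omega (psi C) j = lam_inv C j).

From mathcomp Require Import all_boot zify.
Set Implicit Arguments. Unset Strict Implicit. Unset Printing Implicit Defensive.

(* Read the edge (p, c) added at step i of a chain as "car i prefers spot p + 1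
   and parks in spot c".  An increasing edge set with unique parents is a
   priority forest iff no root lies strictly between the endpoints of an edge:
   one way because a root is the least vertex of its tree, the other because the
   trees are then the level sets of "number of roots up to x".  The non-roots of
   P_(i-1) are the occupied spots, so this criterion says that c is the first
   free spot from p + 1: growing a chain and parking cars are the same process,
   which gives the bijection.  Uniqueness: the two required identities force
   pi(i) = s_P(lambda(i)). *)

Lemma connect_invariant (T : finType) (U : Type) (e : rel T) (g : T -> U) :
  (forall x y, e x y -> g x = g y) -> forall x y, connect e x y -> g x = g y.
Proof.
move=> ge x y /connectP [p pth ->]; elim: p x pth => [|z p IHp] x //= /andP [xz zp].
by rewrite (ge _ _ xz); apply: IHp.
Qed.

Section PriorityForest.
Variable n : nat.
Implicit Types (E : pedges n) (x y : vert n).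

Definition has_parent E (z : nat) : bool := [exists e in E, val e.2 == z].
Definition increasing E := forall e, e \in E -> val e.1 < val e.2.
Definition parent_unique E := forall a b c, (a, c) \in E -> (b, c) \in E -> a = b.
Definition gap_closed E :=
  forall p c (z : nat), (p, c) \in E -> p < z < c -> has_parent E z.

Lemma pforest_increasing E : is_pforest E -> increasing E.
Proof. by case/and3P => /forall_inP incrE _ _ e /incrE. Qed.

Lemma pforest_parent_unique E : is_pforest E -> parent_unique E.
Proof.
case/and3P => _ /forallP uniqE _ a b c ac bc; apply/eqP.
by move: (uniqE c) => /forallP/(_ a)/forallP/(_ b)/implyP; apply; rewrite ac bc.
Qed.

Lemma pforest_ordered E x y x' y' : is_pforest E ->
  samecomp E x x' -> samecomp E y y' -> ~~ samecomp E x y -> x < y -> x' < y'.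
Proof.
case/and3P => _ _ /forallP ordE xx' yy' xy lt_xy.
move: (ordE x) => /forallP/(_ y)/forallP/(_ x')/forallP/(_ y')/implyP; apply.
by rewrite xx' yy' xy lt_xy.
Qed.

Lemma adj_sym E : symmetric (adj E).
Proof. by move=> u v; rewrite /adj orbC. Qed.

Lemma adj_edge E a b : (a, b) \in E -> samecomp E a b.
Proof. by move=> ab; apply: connect1; rewrite /adj ab. Qed.

Definition parent_of E x : vert n := odflt x [pick a | (a, x) \in E].
Definition root_of E x := iter n.+1 (parent_of E) x.

Section Roots.
Variable E : pedges n.
Hypothesis incrE : increasing E.

Lemma parent_of_le x : parent_of E x <= x.
Proof. by rewrite /parent_of; case: pickP => [a /incrE /ltnW|]. Qed.

Lemma parent_of_lt x : parent_of E x != x -> parent_of E x < x.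
Proof. by move=> ne; rewrite ltn_neqAle parent_of_le andbT. Qed.

Lemma iter_parent_of_descends x k :
  iter k (parent_of E) x <= x - k \/
  parent_of E (iter k (parent_of E) x) = iter k (parent_of E) x.
Proof.
elim: k => [|k [IHk|IHk]] /=; first by left; rewrite subn0.
- case: (eqVneq (parent_of E (iter k (parent_of E) x)) (iter k (parent_of E) x)) => [fixed|].
  + by right; rewrite fixed.
  + by move/parent_of_lt => lt; left; lia.
- by right; rewrite IHk.
Qed.

Lemma parent_of_root_of x : parent_of E (root_of E x) = root_of E x.
Proof.
case: (iter_parent_of_descends x n.+1) => // le_root.
apply: val_inj => /=; have := parent_of_le (root_of E x); have := ltn_ord x.
rewrite /root_of in le_root *; lia.
Qed.

Lemma root_of_parent_of x : root_of E (parent_of E x) = root_of E x.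
Proof. by rewrite /root_of -iterSr iterS parent_of_root_of. Qed.

Lemma root_of_le x : root_of E x <= x.
Proof.
suff iter_le k : iter k (parent_of E) x <= x by apply: iter_le.
by elim: k => //= k IHk; apply: leq_trans (parent_of_le _) IHk.
Qed.

Lemma parent_of_edge a b : parent_unique E -> (a, b) \in E -> parent_of E b = a.
Proof.
move=> uniqE ab; rewrite /parent_of; case: pickP => [a' a'b|/(_ a)] /=.
- exact: uniqE a'b ab.
- by rewrite ab.
Qed.

Lemma root_of_connect x y : parent_unique E -> samecomp E x y -> root_of E x = root_of E y.
Proof.
move=> uniqE; apply: connect_invariant => u v /orP [] edge.
- by rewrite -(parent_of_edge uniqE edge) root_of_parent_of.
- by rewrite -(parent_of_edge uniqE edge) root_of_parent_of.
Qed.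

End Roots.

Lemma pforest_gap_closed E : is_pforest E -> gap_closed E.
Proof.
move=> pfE p c z pc /andP [pz zc].
have incrE := pforest_increasing pfE; have uniqE := pforest_parent_unique pfE.
apply: contraT => z_root.
have zn : z < n.+1 by apply: ltn_trans zc (ltn_ord c).
pose zv : vert n := Ordinal zn.
have zv_root : parent_of E zv = zv.
  rewrite /parent_of; case: pickP => [a az|] //=; case/negP: z_root.
  by apply/existsP; exists (a, zv); rewrite az /=.
have [pz_comp|pz_comp] := boolP (samecomp E p zv).
- have := root_of_connect incrE uniqE pz_comp.
  rewrite /root_of (iter_fix _ zv_root) -/(root_of E p) => root_p.
  by have := root_of_le incrE p; rewrite root_p /=; lia.
- have := pforest_ordered pfE (adj_edge pc) (connect0 _ zv) pz_comp pz.
  by rewrite /=; lia.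
Qed.

(* Under the gap property the trees are exactly the level sets of [block E]. *)
Definition block E (x : nat) := count (fun r => ~~ has_parent E r) (iota 0 x.+1).

Lemma block_split E (x y : nat) : x <= y ->
  block E y = block E x + count (fun r => ~~ has_parent E r) (iota x.+1 (y - x)).
Proof.
by move=> le_xy; rewrite /block -count_cat -[x.+1]add0n -iotaD; congr (count _ (iota _ _)); lia.
Qed.

Lemma block_mono E (x y : nat) : x <= y -> block E x <= block E y.
Proof. by move=> le_xy; rewrite (block_split E le_xy) leq_addr. Qed.

Lemma block_eq E (x y : nat) : x <= y -> (forall r, x < r <= y -> has_parent E r) ->
  block E x = block E y.
Proof.
move=> le_xy inner; rewrite (block_split E le_xy).
rewrite (eq_in_count (a2 := pred0)) ?count_pred0 ?addn0 // => r.
by rewrite mem_iota => r_in /=; rewrite inner //; lia.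
Qed.

Lemma block_lt_root E (x y : nat) : ~~ has_parent E y -> x < y -> block E x < block E y.
Proof.
case: y => [|y] // y_root lt_xy.
have -> : block E y.+1 = block E y + 1.
  by rewrite /block -(addn1 y.+1) iotaD count_cat /= y_root; lia.
by have := block_mono E (lt_xy : x <= y); lia.
Qed.

Section GapClosed.
Variable E : pedges n.
Hypotheses (incrE : increasing E) (uniqE : parent_unique E) (gapE : gap_closed E).

Lemma block_edge a b : (a, b) \in E -> block E a = block E b.
Proof.
move=> ab; apply: block_eq; first exact: ltnW (incrE ab).
move=> r /andP [ar rb]; case: (ltngtP r b) rb => // [lt_rb _|-> _].
- by apply: (gapE ab); rewrite ar lt_rb.
- by apply/existsP; exists (a, b); rewrite ab /=.
Qed.

Lemma samecomp_block x y : samecomp E x y -> block E x = block E y.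
Proof.
by apply: (connect_invariant (g := fun v : vert n => block E v)) => u v /orP [] /block_edge.
Qed.

Lemma block_samecomp x y : x <= y -> block E x = block E y -> samecomp E x y.
Proof.
move: (ltnSn y); move: {2}(val y).+1 => k.
elim: k x y => [//|k IHk] x y lt_yk le_xy eq_block.
case: (eqVneq x y) => [-> | ne_xy]; first exact: connect0.
have lt_xy : x < y by rewrite ltn_neqAle le_xy andbT val_eqE.
have [/existsP [[a y0] /andP [ay0 /eqP /val_inj eq_y0]] | y_root] :=
  boolP (has_parent E y); last by have := block_lt_root y_root lt_xy; rewrite eq_block ltnn.
rewrite /= in eq_y0; subst y0; have lt_ay : a < y := incrE ay0.
rewrite -(block_edge ay0) in eq_block.
case: (leqP x a) => le_xa.
- by apply: connect_trans (IHk x a _ le_xa eq_block) (adj_edge ay0); lia.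
- have : samecomp E a x by apply: IHk; [lia | exact: ltnW | exact/esym].
  rewrite /samecomp (sym_connect_sym (@adj_sym E)) => xa.
  exact: connect_trans xa (adj_edge ay0).
Qed.

Lemma gap_closed_pforest : is_pforest E.
Proof.
apply/and3P; split.
- by apply/forall_inP => e /incrE.
- apply/forallP => c; apply/forallP => a; apply/forallP => b.
  by apply/implyP => /andP [ac bc]; apply/eqP; apply: uniqE ac bc.
- apply/forallP => x; apply/forallP => y; apply/forallP => x'; apply/forallP => y'.
  apply/implyP => /and4P [xx' yy' not_xy lt_xy].
  have lt_block : block E x < block E y.
    rewrite ltn_neqAle block_mono ?andbT; last exact: ltnW.
    by apply: contra not_xy => /eqP; apply: block_samecomp; apply: ltnW.
  rewrite (samecomp_block xx') (samecomp_block yy') in lt_block.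
  by apply: contraTltn lt_block => /(block_mono E); rewrite leqNgt.
Qed.

End GapClosed.
End PriorityForest.

Lemma head_filter_iota_cases (P : pred nat) d a k :
  let h := head d (filter P (iota a k)) in
  (h = d /\ forall t, a <= t < a + k -> ~~ P t) \/
  [/\ a <= h < a + k, P h & forall t, a <= t < h -> ~~ P t].
Proof.
elim: k a => [|k IHk] a /=; first by left; split => // t; lia.
case Pa: (P a) => /=; first by right; split => //; [lia | move=> t; lia].
case: (IHk a.+1) => [[-> notP]|[range Ph before]].
- left; split => // t range_t; case: (eqVneq t a) => [->|ne]; first by rewrite Pa.
  by apply: notP; lia.
- right; split => //; first lia.
  move=> t range_t; case: (eqVneq t a) => [->|ne]; first by rewrite Pa.
  by apply: before; lia.
Qed.

Lemma first_free_eq n occ a c : a <= c <= n -> c \notin occ ->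
  (forall t, a <= t < c -> t \in occ) -> first_free n occ a = c.
Proof.
move=> /andP [le_ac le_cn] c_free below_c; rewrite /first_free.
have end_a : a + (n.+1 - a) = n.+1 by lia.
case: (head_filter_iota_cases (fun s => s \notin occ) n.+1 a (n.+1 - a)); rewrite end_a.
- by move=> [_ /(_ c)]; rewrite c_free; lia.
- set r := head _ _ => -[range_r r_free before_r].
  case: (ltngtP r c) => // cmp.
  + by have := below_c r; rewrite (negbTE r_free); lia.
  + by have := before_r c; rewrite c_free; lia.
Qed.

Lemma first_free_spec n occ a : first_free n occ a <= n ->
  [/\ a <= first_free n occ a, first_free n occ a \notin occ &
      forall t, a <= t < first_free n occ a -> t \in occ].
Proof.
rewrite /first_free.
case: (head_filter_iota_cases (fun s => s \notin occ) n.+1 a (n.+1 - a)).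
- by move=> [-> _]; rewrite ltnn.
- move=> [/andP [le_a _] r_free before_r] _; split => // t /before_r.
  by rewrite negbK.
Qed.

Lemma size_parkrec n occ prefs : size (parkrec n occ prefs) = size prefs.
Proof. by elim: prefs occ => //= a prefs IHprefs occ; rewrite IHprefs. Qed.

Lemma nth_parkrec n occ prefs j : j < size prefs ->
  nth 0 (parkrec n occ prefs) j =
  first_free n (rev (take j (parkrec n occ prefs)) ++ occ) (nth 0 prefs j).
Proof.
elim: prefs occ j => //= a prefs IHprefs occ [|j] //= lt_j.
by rewrite IHprefs // rev_cons cat_rcons.
Qed.

Lemma size_spots n m (f : pf_t n m) : size (spots f) = m.
Proof. by rewrite /spots size_parkrec size_map size_enum_ord. Qed.

Lemma nth_spots n m (f : pf_t n m) (j : 'I_m) :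
  nth 0 (spots f) j = first_free n (rev (take j (spots f))) (f j).+1.
Proof.
rewrite /spots nth_parkrec; last by rewrite size_map size_enum_ord.
by rewrite cats0 (nth_map j) ?size_enum_ord // nth_ord_enum.
Qed.

Lemma pick_setD_setU1 (T : finType) (a : T) (X Y : {set T}) :
  X = a |: Y -> a \notin Y -> [pick e in X :\: Y] = Some a.
Proof.
move=> -> aY; case: pickP => [e|/(_ a)]; last by rewrite in_setD setU11 aY.
by rewrite in_setD in_setU1 => /andP [eY /orP [/eqP ->|eY']] //; rewrite eY' in eY.
Qed.

Lemma ohead_filter_iota (f : nat -> nat) j a k :
  ohead [seq i <- iota a k | f i == j] =
  if j \in map f (iota a k) then Some (a + index j (map f (iota a k))) else None.
Proof.
elim: k a => [|k IHk] a //=; rewrite in_cons.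
case fa: (f a == j) => /=; first by rewrite (eqP fa) eqxx addn0.
by rewrite IHk eq_sym fa; case: ifP => // _; rewrite addSnnS.
Qed.

Lemma iota1S k : iota 1 k.+1 = rcons (iota 1 k) k.+1.
Proof. by rewrite -cats1 -{1}[k.+1]addn1 iotaD add1n. Qed.

Lemma has_parent_setU1 n (a : vert n * vert n) (X : pedges n) t :
  has_parent (a |: X) t = (val a.2 == t) || has_parent X t.
Proof.
apply/existsP/orP => [[e /andP [/setU1P [->|eX] et]]|[at_|/existsP [e /andP [eX et]]]].
- by left.
- by right; apply/existsP; exists e; rewrite eX et.
- by exists a; rewrite setU11 at_.
- by exists e; rewrite setU1r.
Qed.

(* Junk value [(0, 0)] when step [i] adds no edge, e.g. outside [1 <= i <= m]. *)
Definition step_edge n m (C : chain_t n m) (i : nat) : vert n * vert n :=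
  odflt (ord0, ord0) [pick e in ch C i :\: ch C i.-1].

Lemma step_edgeE n m (C : chain_t n m) i a :
  ch C i = a |: ch C i.-1 -> a \notin ch C i.-1 -> step_edge C i = a.
Proof. by move=> grow fresh; rewrite /step_edge (pick_setD_setU1 grow fresh). Qed.

Section Chain.
Variables (n m : nat) (C : chain_t n m).
Hypothesis chainC : is_chain C.

Definition step_parent i := val (step_edge C i).1.
Definition step_child i := val (step_edge C i).2.
Definition step_children k := map step_child (iota 1 k).

Lemma chain_bottom : ch C 0 = set0.
Proof. by case/and3P: chainC => /eqP. Qed.

Lemma chain_pforest k : is_pforest (ch C k).
Proof. by case/and3P: chainC => _ /forallP pfC _; apply: pfC. Qed.

Lemma chain_step i : 0 < i <= m ->
  ch C i = step_edge C i |: ch C i.-1 /\ step_edge C i \notin ch C i.-1.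
Proof.
case: i => [|k] //= lt_km.
case/and3P: chainC => _ _ /forallP /(_ (Ordinal lt_km)) /existsP [e /andP [fresh /eqP grow]].
by rewrite (step_edgeE grow fresh).
Qed.

Lemma step_edge_in i : 0 < i <= m -> ((step_edge C i).1, (step_edge C i).2) \in ch C i.
Proof. by move=> i_m; rewrite -surjective_pairing (chain_step i_m).1 setU11. Qed.

Lemma chain_mono j k e : j <= k <= m -> e \in ch C j -> e \in ch C k.
Proof.
elim: k => [|k IHk] /andP [le_jk le_km]; first by move: le_jk; rewrite leqn0 => /eqP ->.
case: (eqVneq j k.+1) => [-> //|ne_jk] e_j.
have k_m : 0 < k.+1 <= m by lia.
by rewrite (chain_step k_m).1 in_setU1 IHk ?orbT //; lia.
Qed.

Lemma step_parent_lt i : 0 < i <= m -> step_parent i < step_child i.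
Proof. by move=> i_m; apply: (pforest_increasing (chain_pforest i)) (step_edge_in i_m). Qed.

Lemma step_child_le i : step_child i <= n.
Proof. exact: (ltn_ord (step_edge C i).2). Qed.

Lemma step_child_fresh i : 0 < i <= m -> ~~ has_parent (ch C i.-1) (step_child i).
Proof.
move=> i_m; have [grow fresh] := chain_step i_m; have added := step_edge_in i_m.
apply/existsP => -[[a b] /andP [ab /eqP /= /val_inj b_child]]; subst b.
have ab_i : (a, (step_edge C i).2) \in ch C i by rewrite grow in_setU1 ab orbT.
have a_par := pforest_parent_unique (chain_pforest i) ab_i added.
by rewrite a_par -surjective_pairing (negbTE fresh) in ab.
Qed.

Lemma step_childrenS k : step_children k.+1 = rcons (step_children k) (step_child k.+1).
Proof. by rewrite /step_children iota1S map_rcons. Qed.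

Lemma has_parent_chain k t : k <= m -> has_parent (ch C k) t = (t \in step_children k).
Proof.
elim: k => [|k IHk] k_m.
  by rewrite chain_bottom; apply/negbTE/existsP => -[e]; rewrite in_set0.
have k1_m : 0 < k.+1 <= m by lia.
rewrite step_childrenS mem_rcons in_cons (chain_step k1_m).1 has_parent_setU1 IHk 1?eq_sym //.
lia.
Qed.

(* Spots before [c] are occupied by the gap property of [ch C k.+1]. *)
Lemma first_free_step k : k < m ->
  first_free n (rev (step_children k)) (step_parent k.+1).+1 = step_child k.+1.
Proof.
move=> lt_km; have k1_m : 0 < k.+1 <= m by lia.
apply: first_free_eq.
- by rewrite step_parent_lt // step_child_le.
- by rewrite mem_rev -has_parent_chain 1?ltnW //; apply: (step_child_fresh k1_m).
- move=> t range_t; rewrite mem_rev -has_parent_chain 1?ltnW //.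
  have := pforest_gap_closed (chain_pforest k.+1) (step_edge_in k1_m) (z := t).
  rewrite (chain_step k1_m).1 has_parent_setU1 => /(_ range_t) /orP [/eqP t_child|//].
  by move: range_t; rewrite /step_child -t_child ltnn andbF.
Qed.

Lemma uniq_step_children : uniq (step_children m).
Proof.
suff uniq_k k : k <= m -> uniq (step_children k) by apply: uniq_k.
elim: k => [//|k IHk] k_m; have k1_m : 0 < k.+1 <= m by lia.
rewrite step_childrenS rcons_uniq IHk 1?ltnW // andbT.
by rewrite -has_parent_chain 1?ltnW //; apply: (step_child_fresh k1_m).
Qed.

Lemma sP_step_child i : 0 < i <= m -> sP (ch C m) (step_child i) = Some (step_parent i).+1.
Proof.
move=> i_m; rewrite /sP.
have -> : 1 <= step_child i <= n by rewrite step_child_le andbT; have := step_parent_lt i_m; lia.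
have in_top : step_edge C i \in ch C m.
  by apply: (chain_mono (j := i)); [lia | rewrite [step_edge C i]surjective_pairing step_edge_in].
case: pickP => [e /andP [e_top /eqP e_child]|/(_ (step_edge C i))] /=; last first.
  by rewrite in_top eqxx.
have e2 : e.2 = (step_edge C i).2 by apply: val_inj.
move: e_top in_top; rewrite [e]surjective_pairing [step_edge C i]surjective_pairing e2.
by move=> e_top in_top; rewrite (pforest_parent_unique (chain_pforest m) e_top in_top).
Qed.

Lemma sP_notin_step_children t : t \notin step_children m -> sP (ch C m) t = None.
Proof.
move=> t_new; rewrite /sP; case: ifP => // _; case: pickP => [e /andP [e_top /eqP e_t]|] //=.
by move: t_new; rewrite -has_parent_chain // => /existsP []; exists e; rewrite e_top e_t /=.
Qed.

Lemma lam_step i : 0 < i <= m -> lam C i = Some (step_child i).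
Proof.
move=> i_m; have [grow fresh] := chain_step i_m.
rewrite /lam i_m (pick_setD_setU1 grow fresh) /=; congr Some.
by apply/maxn_idPr/ltnW/(step_parent_lt i_m).
Qed.

End Chain.

Section ChainToParking.
Variables n m : nat.
Implicit Type C : chain_t n.+1 m.

Definition psi C : pf_t n.+1 m := [ffun k : 'I_m => inord (step_parent C k.+1)].

Section OnChain.
Variable C : chain_t n.+1 m.
Hypothesis chainC : is_chain C.

Lemma psiE (k : 'I_m) : val (psi C k) = step_parent C k.+1.
Proof.
have k_m : 0 < k.+1 <= m by rewrite ltn_ord.
rewrite ffunE /= inordK //; have := step_parent_lt chainC k_m; have := step_child_le C k.+1; lia.
Qed.

Lemma pv_psi i : 0 < i <= m -> pv (psi C) i = Some (step_parent C i).+1.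
Proof.
case: i => [|i] // i_m; rewrite /pv; case: insubP => [k _ val_k|]; last by move=> /negP []; lia.
by rewrite /= psiE val_k.
Qed.

Lemma spots_psi : spots (psi C) = step_children C m.
Proof.
suff take_spots j : j <= m -> take j (spots (psi C)) = step_children C j.
  by rewrite -(take_size (spots (psi C))) size_spots take_spots.
elim: j => [|j IHj] j_m; first by rewrite take0.
rewrite (take_nth 0) ?size_spots // (nth_spots _ (Ordinal j_m)) IHj 1?ltnW //.
by rewrite psiE (first_free_step chainC j_m) step_childrenS.
Qed.

Lemma lam_invE j : lam_inv C j =
  if j \in step_children C m then Some (index j (step_children C m)).+1 else None.
Proof.
rewrite /lam_inv /pinv (eq_in_filter (a2 := fun i => step_child C i == j)).
  by rewrite ohead_filter_iota add1n.
by move=> i; rewrite mem_iota => i_m; rewrite (lam_step chainC); last lia.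
Qed.

Lemma lam_inv_step_child i : 0 < i <= m -> lam_inv C (step_child C i) = Some i.
Proof.
move=> i_m; have i1_m : i.-1 < size (step_children C m) by rewrite size_map size_iota; lia.
have -> : step_child C i = nth 0 (step_children C m) i.-1.
  by rewrite (nth_map 0) ?size_iota ?nth_iota; [congr step_child; lia | lia | lia].
by rewrite lam_invE mem_nth // index_uniq ?uniq_step_children //; congr Some; lia.
Qed.

Lemma omega_psi j : 1 <= j <= n.+1 -> omega (psi C) j = lam_inv C j.
Proof. by move=> j_n; rewrite /omega j_n spots_psi lam_invE. Qed.

Lemma pv_omega_psi j : 1 <= j <= n.+1 ->
  pfcomp (pv (psi C)) (omega (psi C)) j = sP (ch C m) j.
Proof.
move=> j_n; rewrite /pfcomp /omega j_n spots_psi /=.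
case: ifP => [j_child|j_new]; last by rewrite sP_notin_step_children // j_new.
set i := index j _; rewrite -[obind _ _]/(pv (psi C) i.+1).
have i_m : 0 < i.+1 <= m by move: j_child; rewrite -index_mem size_map size_iota.
have j_i : step_child C i.+1 = j.
  by have := nth_index 0 j_child; rewrite (nth_map 0) ?size_iota // nth_iota.
by rewrite (pv_psi i_m) -j_i (sP_step_child chainC).
Qed.

End OnChain.

Lemma psi_inj C1 C2 : is_chain C1 -> is_chain C2 -> psi C1 = psi C2 -> C1 = C2.
Proof.
move=> chain1 chain2 psi12.
have same_children : step_children C1 m = step_children C2 m by rewrite -!spots_psi // psi12.
have same_edges i : 0 < i <= m -> step_edge C1 i = step_edge C2 i.
  case: i => [|i] // i_m.
  have same_child : step_child C1 i.+1 = step_child C2 i.+1.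
    have := congr1 (nth 0 ^~ i) same_children.
    by rewrite !(nth_map 0) ?size_iota ?nth_iota.
  have same_parent : step_parent C1 i.+1 = step_parent C2 i.+1.
    by have := congr1 (fun f : pf_t n.+1 m => val (f (Ordinal i_m))) psi12; rewrite /= !psiE.
  by rewrite [step_edge C1 _]surjective_pairing [step_edge C2 _]surjective_pairing;
    congr pair; apply: val_inj.
have same_ch k : k <= m -> ch C1 k = ch C2 k.
  elim: k => [|k IHk] k_m; first by rewrite !chain_bottom.
  have k1_m : 0 < k.+1 <= m by lia.
  by rewrite (chain_step chain1 k1_m).1 (chain_step chain2 k1_m).1 same_edges // IHk 1?ltnW.
by apply/ffunP => k; have := same_ch k (ltn_ord k); rewrite /ch inord_val.
Qed.

Lemma psi_unique (psi' : chain_t n.+1 m -> pf_t n.+1 m) : psi_spec psi' ->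
  forall C, is_chain C -> psi' C = psi C.
Proof.
move=> spec' C chainC; apply/ffunP => k; apply: val_inj.
have k_m : 0 < k.+1 <= m by rewrite ltn_ord.
have c_n : 1 <= step_child C k.+1 <= n.+1.
  by rewrite step_child_le andbT; have := step_parent_lt chainC k_m; lia.
have [sP_spec omega_spec] := spec' C chainC.
have := sP_spec _ c_n; rewrite /pfcomp omega_spec // lam_inv_step_child //.
rewrite (sP_step_child chainC k_m) /= /pv psiE //.
by case: insubP => [k' _ val_k' [] <-|]; [congr (val (psi' C _)); apply: val_inj | rewrite ltn_ord].
Qed.

End ChainToParking.

Section ParkingToChain.
Variables (n m : nat) (f : pf_t n.+1 m).
Hypothesis parkf : is_parking f.

Lemma parking_spot_spec (j : 'I_m) :
  [/\ (f j).+1 <= nth 0 (spots f) j <= n.+1,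
      forall i : 'I_m, i < j -> nth 0 (spots f) i != nth 0 (spots f) j &
      forall t, f j < t < nth 0 (spots f) j ->
        exists2 i : 'I_m, i < j & nth 0 (spots f) i = t].
Proof.
have le_take : j <= size (spots f) by rewrite size_spots ltnW.
have spot_n : nth 0 (spots f) j <= n.+1 by apply: (allP parkf); rewrite mem_nth ?size_spots.
have := spot_n; rewrite nth_spots => /first_free_spec.
rewrite -nth_spots => -[le_pref spot_free before_spot]; split.
- by rewrite le_pref spot_n.
- move=> i lt_ij; apply: contra spot_free => /eqP <-.
  by rewrite mem_rev -(nth_take 0 lt_ij) mem_nth // size_takel.
- move=> t range_t; have := before_spot t range_t; rewrite mem_rev => /(nthP 0) [i].
  rewrite size_takel // => lt_ij; rewrite nth_take // => spot_i.
  by exists (Ordinal (ltn_trans lt_ij (ltn_ord j))).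
Qed.

Lemma spots_inj (i j : 'I_m) : nth 0 (spots f) i = nth 0 (spots f) j -> i = j.
Proof.
move=> eq_ij; apply/eqP; apply: contraT; rewrite neq_ltn => /orP [lt_ij|lt_ji].
- by have [_ /(_ i lt_ij)] := parking_spot_spec j; rewrite eq_ij eqxx.
- by have [_ /(_ j lt_ji)] := parking_spot_spec i; rewrite eq_ij eqxx.
Qed.

Definition park_edge (j : 'I_m) : vert n.+1 * vert n.+1 :=
  (inord (f j), inord (nth 0 (spots f) j)).

Definition park_forest (k : nat) : pedges n.+1 := park_edge @: [set j : 'I_m | j < k].

Lemma park_edge1 j : val (park_edge j).1 = f j.
Proof. by rewrite /= inordK // ltnS ltnW. Qed.

Lemma park_edge2 j : val (park_edge j).2 = nth 0 (spots f) j.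
Proof. by rewrite /= inordK // ltnS; have [/andP [_ ->] _ _] := parking_spot_spec j. Qed.

Lemma park_forest_pforest k : is_pforest (park_forest k).
Proof.
apply: gap_closed_pforest.
- move=> _ /imsetP [j _ ->]; rewrite park_edge1 park_edge2.
  by have [/andP [] ] := parking_spot_spec j.
- move=> a b c /imsetP [i _ ei] /imsetP [j _ ej].
  have eq_ij : i = j.
    apply: spots_inj; rewrite -!park_edge2.
    by rewrite -(congr1 (fun e => val e.2) ei) -(congr1 (fun e => val e.2) ej).
  by move: ej; rewrite -eq_ij -ei => -[].
- move=> p c z /imsetP [j]; rewrite inE => lt_jk ej.
  have [-> ->] : val p = f j /\ val c = nth 0 (spots f) j.
    by rewrite -park_edge1 -park_edge2 -ej.
  have [_ _ before_spot] := parking_spot_spec j.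
  move=> /before_spot [i lt_ij spot_i]; apply/existsP; exists (park_edge i).
  by rewrite park_edge2 spot_i eqxx andbT imset_f // inE (ltn_trans lt_ij).
Qed.

Lemma park_forestS (k : 'I_m) :
  park_forest k.+1 = park_edge k |: park_forest k /\ park_edge k \notin park_forest k.
Proof.
split.
  rewrite /park_forest; have -> : [set j : 'I_m | j < k.+1] = k |: [set j : 'I_m | j < k].
    by apply/setP => j; rewrite !inE ltnS leq_eqVlt val_eqE.
  by rewrite imsetU1.
apply/imsetP => -[j]; rewrite inE => lt_jk /(congr1 (fun e => val e.2)).
by rewrite !park_edge2 => /spots_inj eq_kj; move: lt_jk; rewrite eq_kj ltnn.
Qed.

Definition park_chain : chain_t n.+1 m := [ffun k : 'I_m.+1 => park_forest k].

Lemma ch_park_chain k : k <= m -> ch park_chain k = park_forest k.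
Proof. by move=> k_m; rewrite /ch ffunE inordK. Qed.

Lemma park_chain_is_chain : is_chain park_chain.
Proof.
apply/and3P; split.
- rewrite ch_park_chain //; apply/eqP/setP => e; rewrite in_set0.
  by apply/imsetP => -[j]; rewrite inE ltn0.
- by apply/forallP => k; rewrite ffunE; apply: park_forest_pforest.
- apply/forallP => k; apply/existsP; exists (park_edge k).
  have [grow fresh] := park_forestS k.
  by rewrite !ch_park_chain ?grow ?eqxx ?fresh // ltnW.
Qed.

Lemma psi_park_chain : psi park_chain = f.
Proof.
apply/ffunP => k; apply: val_inj; rewrite psiE; last exact: park_chain_is_chain.
have [grow fresh] := park_forestS k.
rewrite /step_parent (@step_edgeE _ _ park_chain k.+1 (park_edge k)) ?park_edge1 //=.
  by rewrite !ch_park_chain // ltnW.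
by rewrite ch_park_chain // ltnW.
Qed.

End ParkingToChain.

Theorem theorem4p3 (n m : nat) (hm : 1 <= m <= n) :
  exists psi : chain_t n m -> pf_t n m,
    [/\ chain_pf_bij psi,
        psi_spec psi,
        (forall psi' : chain_t n m -> pf_t n m,
            chain_pf_bij psi' -> psi_spec psi' ->
            forall C, is_chain C -> psi' C = psi C) &
        (forall C, is_chain C -> forall i, 1 <= i <= m ->
            pv (psi C) i = pfcomp (sP (ch C m)) (lam C) i)].
Proof.
case: n hm => [|n] hm; first by lia.
exists (@psi n m); split.
- split.
  + move=> C chainC; rewrite /is_parking spots_psi //.
    by apply/allP => _ /mapP [i _ ->]; apply: step_child_le.
  + exact: psi_inj.
  + by move=> f parkf; exists (park_chain f); [apply: park_chain_is_chain | apply: psi_park_chain].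
- by move=> C chainC; split => j j_n; [apply: pv_omega_psi | apply: omega_psi].
- by move=> psi' _ spec' C chainC; apply: psi_unique.
- move=> C chainC i i_m.
  by rewrite /pfcomp (lam_step chainC i_m) /= (sP_step_child chainC i_m) pv_psi.
Qed.
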